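(* If $\mathcal C\subseteq2^{[n]}$ is a stable hyperplane code, then $\mathcal C$ can be realized by a stable pair $(\mathcal H,\mathcal P)$, i.e. $\mathcal C=\mathrm{code}(\mathcal H,\mathcal P)$, where $\mathcal P=\bigcap_{j\in[m]}B_j^+$ is an open polytope, given as the intersection of open half-spaces bounded by hyperplanes $\mathcal B=\{B_1,\dots,B_m\}$, such that the arrangement $\mathcal H\cup\mathcal B$ has generic intersections in $\mathbb R^d$.
   Context: An oriented affine hyperplane is $H=\{x\in\mathbb R^d:w\cdot x-h=0\}$ with $w\neq0$, and $H^+=\{w\cdot x-h>0\}$. For $\mathcal H=\{H_1,\dots,H_n\}$ and open convex $X$, $\mathrm{code}(\mathcal H,X)$ is the set of $\sigma\subseteq[n]$ with $\bigl(\bigcap_{i\in\sigma}(H_i^+\cap X)\bigr)\setminus\bigcup_{j\notin\sigma}H_j^+\ne\emptyset$ (for $\sigma=\emptyset$: $X\setminus\bigcup_iH_i^+\ne\emptyset$). $(\mathcal H,X)$ is stable if $X$ is open convex and for every $\sigma\subseteq[n]$ with $X\cap\bigcap_{i\in\sigma}H_i\neq\emptyset$, $\dim\bigcap_{i\in\sigma}H_i=d-|\sigma|$; a stable hyperplane code is the code of a stable pair. A finite set of hyperplanes $\mathcal A$ has generic intersections in $\mathbb R^d$ if every subfamily with nonempty intersection has intersection of dimension $d$ minus the size of the subfamily. *)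

From HB Require Import structures.
From mathcomp Require Import all_boot all_order all_algebra.
From mathcomp Require Import all_classical all_reals all_analysis.
Set Implicit Arguments. Unset Strict Implicit. Unset Printing Implicit Defensive.
Import Order.TTheory GRing.Theory Num.Theory numFieldNormedType.Exports.
Local Open Scope ring_scope.
Local Open Scope classical_set_scope.

Section Defs.
Variables (R : realType) (d : nat).

Definition dotv (u v : 'rV[R]_d) : R := \sum_(i < d) u 0 i * v 0 i.

Record hyp := Hyp { hw : 'rV[R]_d; hh : R; hw_neq0 : hw != 0 }.

Definition hplane (H : hyp) : set 'rV[R]_d := [set x | dotv (hw H) x - hh H = 0].
Definition hpos (H : hyp) : set 'rV[R]_d := [set x | dotv (hw H) x - hh H > 0].

Definition convex_set_rV (X : set 'rV[R]_d) : Prop :=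
  forall x y t, X x -> X y -> 0 <= t <= 1 -> X ((1 - t) *: x + t *: y).

Definition aff_indep (k : nat) (p : 'I_k.+1 -> 'rV[R]_d) : Prop :=
  \rank (\matrix_(i < k) (p (lift ord0 i) - p ord0)) = k.
Definition has_affdim (S : set 'rV[R]_d) (k : nat) : Prop :=
  (exists p : 'I_k.+1 -> 'rV[R]_d, (forall i, S (p i)) /\ aff_indep p) /\
  (forall k', (k < k')%N ->
     ~ exists p : 'I_k'.+1 -> 'rV[R]_d, (forall i, S (p i)) /\ aff_indep p).

Definition hcap (N : nat) (H : 'I_N -> hyp) (s : {set 'I_N}) : set 'rV[R]_d :=
  [set x | forall i, i \in s -> hplane (H i) x].

Definition hcode (n : nat) (H : 'I_n -> hyp) (X : set 'rV[R]_d) : {set {set 'I_n}} :=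
  [set s : {set 'I_n} | `[< exists x, X x /\
        (forall i, i \in s -> hpos (H i) x) /\
        (forall j, j \notin s -> ~ hpos (H j) x) >]].

Definition dim_cond (N : nat) (H : 'I_N -> hyp) (Y : set 'rV[R]_d) : Prop :=
  forall s : {set 'I_N}, (Y `&` hcap H s !=set0) ->
    (#|s| <= d)%N /\ has_affdim (hcap H s) (d - #|s|).

Definition stable_pair (n : nat) (H : 'I_n -> hyp) (X : set 'rV[R]_d) : Prop :=
  open X /\ convex_set_rV X /\ dim_cond H X.

Definition generic_intersections (N : nat) (A : 'I_N -> hyp) : Prop :=
  dim_cond A setT.

Definition open_polytope (m : nat) (B : 'I_m -> hyp) : set 'rV[R]_d :=
  [set x | forall j, hpos (B j) x].

Definition hcat (n m : nat) (H : 'I_n -> hyp) (B : 'I_m -> hyp) : 'I_(n + m) -> hyp :=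
  fun k => match fintype.split k with inl i => H i | inr j => B j end.
End Defs.

Definition stable_hyperplane_code (R : realType) (n : nat) (C : {set {set 'I_n}}) : Prop :=
  exists (d : nat) (H : 'I_n -> hyp R d) (X : set 'rV[R]_d),
    stable_pair H X /\ C = hcode H X.

From HB Require Import structures.
From mathcomp Require Import all_boot all_order all_algebra.
From mathcomp Require Import all_classical all_reals all_analysis.
From mathcomp Require Import ring lra zify.
Set Implicit Arguments. Unset Strict Implicit. Unset Printing Implicit Defensive.
Import Order.TTheory GRing.Theory Num.Theory numFieldNormedType.Exports.
Local Open Scope ring_scope.
Local Open Scope classical_set_scope.

(* Pick for every codeword s_k of C a witness p_k in X lying on none of the
   hyperplanes (stability lets one push a point off the hyperplanes through it).
   In R^K, with h_i the affine form of H_i, let H'_i have normal (h_i(p_k))_k and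
   let P be cut out by lam_k > 0 and sum_k lam_k > 1: a point lam of P has the sign
   vector of the convex combination sum_k lam_k p_k / sum_k lam_k of points of X,
   and e_k + (small) has that of p_k, so code(H', P) = C.  To make H' u B generic
   one perturbs the offsets: for a rank-deficient subfamily the offsets of a
   consistent system satisfy a nontrivial linear relation, which a generic choice
   avoids.  The code survives the perturbation because, by compactness of the
   simplex, the hyperplanes passing close to a convex combination of witnesses
   always have independent normals, so a small change of their offsets is absorbed
   by a small move of the point. *)

Section RealEstimates.
Variable R : realType.

Lemma forall_small_pos (I : finType) (P : I -> R -> Prop) :
  (forall i, exists2 r, 0 < r & forall e, 0 < e -> e < r -> P i e) ->
  exists2 e, 0 < e & forall i, P i e.
Proof.
move=> /fin_all_exists2 [r r0 hr].
pose m := \big[Num.min/1]_i r i.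
have m0 : 0 < m by apply: lt_bigmin => // i _.
exists (m / 2) => [|i]; first by rewrite divr_gt0.
apply: hr; first by rewrite divr_gt0.
by apply: (lt_le_trans _ (bigmin_le 1 i r)); rewrite -/m ltr_pdivrMr // ltr_pMr // ltr1n.
Qed.

Lemma addr_gt0_norm_lt (a b : R) : `|b| < `|a| -> (0 < a + b) = (0 < a).
Proof.
rewrite ltr_norml => /andP [b1 b2].
have [a0|a0] := leP 0 a; [rewrite ger0_norm // in b1 b2 | rewrite ltr0_norm // in b1 b2];
  apply/idP/idP => h; lra.
Qed.

Lemma normr_sum_mul_le (I : finType) (z v : I -> R) r :
  (forall i, `|v i| <= r) -> `|\sum_i z i * v i| <= r * \sum_i `|z i|.
Proof.
move=> hv; apply: le_trans (ler_norm_sum _ _ _) _; rewrite mulr_sumr.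
by apply: ler_sum => i _; rewrite normrM mulrC ler_wpM2r.
Qed.

Lemma small_mul_lt (c b : R) : 0 < b ->
  exists2 r, 0 < r & forall t, 0 < t -> t < r -> `|t * c| < b.
Proof.
move=> b0; have c1 : 0 < 1 + `|c| by rewrite ltr_pwDl.
exists (b / (1 + `|c|)) => [|t t0]; first by rewrite divr_gt0.
rewrite ltr_pdivlMr // normrM gtr0_norm // => tb.
by apply: le_lt_trans tb; rewrite ler_pM2l // lerDr.
Qed.

Lemma mulmx_row_small m k (M : 'M[R]_(m, k)) e : 0 < e ->
  exists2 r, 0 < r & forall v : 'rV[R]_m, (forall i, `|v 0 i| < r) ->
    forall j, `|(v *m M) 0 j| < e.
Proof.
move=> e0; pose L := 1 + \sum_i \sum_j `|M i j|.
have L0 : 0 < L by rewrite ltr_pwDl // sumr_ge0 // => i _; rewrite sumr_ge0.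
exists (e / L) => [|v hv j]; first by rewrite divr_gt0.
rewrite mxE (eq_bigr (fun i => M i j * v 0 i)) => [|i _]; last by rewrite mulrC.
apply: le_lt_trans (normr_sum_mul_le _ (fun i => ltW (hv i))) _.
rewrite -[X in _ < X](divfK (lt0r_neq0 L0)) ltr_pM2l ?divr_gt0 //.
apply: le_lt_trans (_ : \sum_i \sum_j `|M i j| < L); last by rewrite ltrDr.
by apply: ler_sum => i _; rewrite (bigD1 j) //= lerDl sumr_ge0.
Qed.

End RealEstimates.

Section DotProduct.
Variables (R : realType) (d : nat).
Implicit Types (u x y : 'rV[R]_d) (A : hyp R d).

Lemma dotvD u x y : dotv u (x + y) = dotv u x + dotv u y.
Proof. by rewrite /dotv -big_split; apply: eq_bigr => i _; rewrite mxE mulrDr. Qed.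

Lemma dotvZ u a x : dotv u (a *: x) = a * dotv u x.
Proof. by rewrite /dotv mulr_sumr; apply: eq_bigr => i _; rewrite mxE mulrCA. Qed.

Lemma dotv_sum u K (f : 'I_K -> 'rV[R]_d) : dotv u (\sum_k f k) = \sum_k dotv u (f k).
Proof.
rewrite /dotv exchange_big; apply: eq_bigr => i _.
by rewrite summxE mulr_sumr.
Qed.

Lemma dotv_delta (k : 'I_d) x : dotv (delta_mx 0 k) x = x 0 k.
Proof.
rewrite /dotv (bigD1 k) //= big1 ?addr0 => [|l /negbTE lk]; first by rewrite mxE !eqxx mul1r.
by rewrite mxE lk andbF mul0r.
Qed.

Lemma dotv_const1 x : dotv (const_mx 1) x = \sum_j x 0 j.
Proof. by apply: eq_bigr => j _; rewrite mxE mul1r. Qed.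

Lemma normr_dotv_le u x r : (forall j, `|x 0 j| <= r) -> `|dotv u x| <= r * \sum_j `|u 0 j|.
Proof. exact: normr_sum_mul_le. Qed.

Definition hval A x := dotv (hw A) x - hh A.

Lemma hvalD A x y : hval A (x + y) = hval A x + dotv (hw A) y.
Proof. by rewrite /hval dotvD addrAC. Qed.

Lemma hval_convex A K (mu : 'I_K -> R) (p : 'I_K -> 'rV[R]_d) :
  \sum_k mu k = 1 -> hval A (\sum_k mu k *: p k) = \sum_k mu k * hval A (p k).
Proof.
move=> mu1; rewrite /hval dotv_sum.
under [RHS]eq_bigr do rewrite mulrBr.
by rewrite sumrB -mulr_suml mu1 mul1r; under eq_bigr do rewrite dotvZ.
Qed.

End DotProduct.

Section AffineSolutions.
Variables (R : realType) (D N : nat) (a : 'I_N -> 'rV[R]_D).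
Implicit Types (c : 'I_N -> R) (s : {set 'I_N}) (x y : 'rV[R]_D).

Definition normal_mx s : 'M[R]_(#|s|, D) := \matrix_(k < #|s|) a (enum_val k).

Definition affsol c s := [set x | forall i, i \in s -> dotv (a i) x = c i].

Lemma normal_mx_mulmx s x k : (x *m (normal_mx s)^T) 0 k = dotv (a (enum_val k)) x.
Proof. by rewrite !mxE; apply: eq_bigr => j _; rewrite !mxE mulrC. Qed.

Lemma affsolP c s x : affsol c s x <-> x *m (normal_mx s)^T = \row_k c (enum_val k).
Proof.
split=> [hx | /rowP hx i si]; first by apply/rowP => k; rewrite normal_mx_mulmx mxE hx ?enum_valP.
by have := hx (enum_rank_in si i); rewrite normal_mx_mulmx mxE enum_rankK_in.
Qed.

Lemma has_affdim_affsol c s x0 : affsol c s x0 ->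
  has_affdim (affsol c s) (D - \rank (normal_mx s)).
Proof.
move=> /affsolP hx0; set K := kermx (normal_mx s)^T.
have -> : (D - \rank (normal_mx s))%N = \rank K by rewrite mxrank_ker mxrank_tr.
have affsolK y : affsol c s y <-> (y - x0 <= K)%MS.
  rewrite affsolP; apply: (iff_trans _ (rwP sub_kermxP)).
  rewrite mulmxBl hx0; split=> [->|/eqP]; first by rewrite subrr.
  by rewrite subr_eq0 => /eqP.
split.
  pose p i := x0 + (if unlift ord0 i is Some j then row j (row_base K) else 0).
  have pE i : p (lift ord0 i) - p ord0 = row i (row_base K).
    by rewrite /p liftK unlift_none addr0 (addrC x0) addrK.
  exists p; split; last first.
    rewrite /aff_indep (_ : \matrix_i _ = row_base K) ?eq_row_base //.
    by apply/row_matrixP => i; rewrite rowK pE.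
  move=> i; apply/affsolK; rewrite /p (addrC x0) addrK.
  case: (unlift ord0 i) => [j|]; last exact: sub0mx.
  by rewrite (submx_trans (row_sub j _)) ?eq_row_base.
move=> k lt_k [p [hp ip]]; move: lt_k; rewrite ltnNge -ip; apply/negP/negPn.
have hK j : (p j - x0 <= K)%MS by apply/affsolK.
apply: mxrankS; apply/row_subP => i; rewrite rowK.
have -> : p (lift ord0 i) - p ord0 = (p (lift ord0 i) - x0) - (p ord0 - x0).
  by rewrite opprB addrA subrK.
by rewrite addmx_sub ?hK // eqmx_opp hK.
Qed.

Definition affsolve s (g : 'I_N -> R) : 'rV[R]_D :=
  \row_k g (enum_val k) *m pinvmx (normal_mx s)^T.

Lemma affsolveP s g : row_free (normal_mx s) -> affsol g s (affsolve s g).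
Proof.
move=> free_s; apply/affsolP; rewrite /affsolve mulmxKpV //.
by rewrite submx_full // /row_full mxrank_tr.
Qed.

Lemma affsolve_small rho : 0 < rho ->
  exists2 del : R, 0 < del & forall s g, (forall i, `|g i| < del) ->
    forall j, `|affsolve s g 0 j| < rho.
Proof.
move=> rho0; apply: forall_small_pos => s.
have [r r0 hr] := mulmx_row_small (pinvmx (normal_mx s)^T) rho0.
exists r => // del _ del_r g hg j; apply: hr => k.
by rewrite mxE; exact: lt_trans (hg _) del_r.
Qed.

End AffineSolutions.

Lemma has_affdim_unique (R : realType) d (S : set 'rV[R]_d) k k' :
  has_affdim S k -> has_affdim S k' -> k = k'.
Proof.
move=> [Sk Sk_max] [Sk' Sk'_max].
by case: (ltngtP k k') => // lt; [case: (Sk_max _ lt Sk') | case: (Sk'_max _ lt Sk)].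
Qed.

Section RankCondition.
Variables (R : realType) (D N : nat).
Implicit Types (A : 'I_N -> hyp R D) (s : {set 'I_N}).

Definition normals A i := hw (A i).
Definition offsets A i := hh (A i).

Lemma hcapE A s : hcap A s = affsol (normals A) (offsets A) s.
Proof.
apply/seteqP; split=> x hx i /hx; rewrite /hplane /=; last by move=> ->; rewrite subrr.
by move/eqP; rewrite subr_eq0 => /eqP.
Qed.

Lemma dim_condP A (Y : set 'rV[R]_D) :
  dim_cond A Y <-> forall s, Y `&` hcap A s !=set0 -> row_free (normal_mx (normals A) s).
Proof.
split=> hY s hs; have [x [_]] := hs; rewrite hcapE => /has_affdim_affsol haff.
  have [le_sD] := hY s hs; rewrite hcapE => /has_affdim_unique/(_ haff).
  have := rank_leq_row (normal_mx (normals A) s); rewrite /row_free; lia.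
have /eqP r_s := hY s hs; split; first by rewrite -r_s rank_leq_col.
by move: haff; rewrite -hcapE r_s.
Qed.

End RankCondition.

Lemma exists_pos_nonroot (R : realType) (p : {poly R}) r : p != 0 -> 0 < r ->
  exists2 t, 0 < t < r & ~~ root p t.
Proof.
move=> p0 r0; pose rs := [seq r / k.+2%:R | k <- iota 0 (size p)].
have uniq_rs : uniq rs.
  rewrite map_inj_uniq ?iota_uniq // => k l /(mulfI (lt0r_neq0 r0))/invr_inj/eqP.
  by rewrite eqr_nat !eqSS => /eqP.
have : has (predC (root p)) rs.
  rewrite has_predC; apply/negP => roots_rs.
  by have := max_poly_roots p0 roots_rs uniq_rs; rewrite size_map size_iota ltnn.
case/hasP => _ /mapP [k _ ->] nonroot; exists (r / k.+2%:R) => //.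
by rewrite divr_gt0 //= ltr_pdivrMr // ltr_pMr // ltr1n.
Qed.

Section GenericOffsets.
Variables (R : realType) (D N : nat).

Lemma exists_near_nonvanishing (I : finType) (P : pred I) (z : I -> 'I_N -> R)
    (c0 : 'I_N -> R) e :
  0 < e -> (forall j, P j -> exists i, z j i != 0) ->
  exists c, (forall i, `|c i - c0 i| < e) /\ forall j, P j -> \sum_i z j i * c i != 0.
Proof.
move=> e0 hz.
(* Along c(t)_i = c0_i + t^(i+1), each relation z j is a nonzero polynomial in t. *)
pose pz j := (\sum_i z j i * c0 i)%:P + \sum_i z j i *: 'X^(i.+1).
have pz_neq0 j : P j -> pz j != 0.
  move=> /hz [i0 zi0]; apply: contra_neq zi0 => /(congr1 (coefp i0.+1)) /=.
  rewrite coef0 coefD coefC coef_sum add0r (bigD1 i0) //= coefZ coefXn eqxx mulr1.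
  rewrite big1 ?addr0 // => i ne_i; rewrite coefZ coefXn eqSS.
  have /negbTE -> : (i0 : nat) != i by rewrite eq_sym; exact: ne_i.
  by rewrite mulr0.
have pzE j t : (pz j).[t] = \sum_i z j i * (c0 i + t ^+ i.+1).
  rewrite hornerD hornerC horner_sum; under [in RHS]eq_bigr do rewrite mulrDr.
  by rewrite big_split /=; congr (_ + _); apply: eq_bigr => i _; rewrite hornerZ hornerXn.
have Q0 : \prod_(j | P j) pz j != 0.
  by rewrite prodf_seq_neq0; apply/allP => j _; apply/implyP; exact: pz_neq0.
have min_gt0 : 0 < Num.min e 1 by rewrite lt_min e0 ltr01.
have [t /andP [t0]] := exists_pos_nonroot Q0 min_gt0.
rewrite lt_min => /andP [t_e t1]; rewrite rootE horner_prod => Qt.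
exists (fun i => c0 i + t ^+ i.+1); split.
  move=> i; rewrite addrC addKr ger0_norm ?exprn_ge0 ?ltW //.
  by apply: le_lt_trans t_e; rewrite exprSr ler_piMl ?exprn_ile1 ?ltW.
move=> j Pj; rewrite -pzE; move: Qt; rewrite prodf_seq_neq0 => /allP /(_ j).
by rewrite mem_index_enum Pj => /(_ isT).
Qed.

Lemma rank_deficient_relation (a : 'I_N -> 'rV[R]_D) s : ~~ row_free (normal_mx a s) ->
  exists2 z : 'I_N -> R, (exists i, z i != 0) &
    forall c, affsol a c s !=set0 -> \sum_i z i * c i = 0.
Proof.
rewrite -kermx_eq0 => /rowV0Pn [y /sub_kermxP yM y0].
have [k0 yk0] : exists k0, y 0 k0 != 0.
  apply/existsP; apply: contraR y0 => /existsPn y_0.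
  by apply/eqP/rowP => k; rewrite mxE; apply/eqP/negPn.
pose z i := \sum_(k | enum_val k == i) y 0 k.
exists z.
  exists (enum_val k0); rewrite /z (eq_bigl (pred1 k0)) ?big_pred1_eq // => k.
  by rewrite /= (inj_eq enum_val_inj).
move=> c [x /affsolP hx].
have -> : \sum_i z i * c i = \sum_k y 0 k * c (enum_val k).
  rewrite (partition_big enum_val predT) //=; apply: eq_bigr => i _.
  by rewrite mulr_suml; apply: eq_bigr => k /eqP ->.
rewrite -[RHS](_ : (x *m (normal_mx a s)^T *m y^T) 0 0 = 0); last first.
  by rewrite -mulmxA -trmx_mul yM trmx0 mulmx0 mxE.
by rewrite hx mxE; apply: eq_bigr => k _; rewrite !mxE mulrC.
Qed.

Lemma exists_generic_offsets (a : 'I_N -> 'rV[R]_D) c0 e : 0 < e ->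
  exists c, (forall i, `|c i - c0 i| < e) /\
    forall s, affsol a c s !=set0 -> row_free (normal_mx a s).
Proof.
move=> e0.
have /fin_all_exists [z hz] : forall s, exists zs : 'I_N -> R,
    ~~ row_free (normal_mx a s) ->
    (exists i, zs i != 0) /\ forall c, affsol a c s !=set0 -> \sum_i zs i * c i = 0.
  move=> s; case: (boolP (row_free _)) => [_ | /rank_deficient_relation].
    by exists (fun=> 0).
  by case=> zs zs0 hzs; exists zs.
have [c [near_c hc]] := exists_near_nonvanishing c0 e0 (fun s bs => (hz s bs).1).
exists c; split=> // s sol_s; apply: contraT => bs.
by have := hc s bs; rewrite ((hz s bs).2 c sol_s) eqxx.
Qed.

End GenericOffsets.

Lemma generic_perturbation (R : realType) D N (A : 'I_N -> hyp R D) e : 0 < e ->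
  exists A' : 'I_N -> hyp R D,
    (forall i, hw (A' i) = hw (A i) /\ `|hh (A' i) - hh (A i)| < e) /\
    generic_intersections A'.
Proof.
move=> e0; have [c [near_c hc]] := exists_generic_offsets (normals A) (offsets A) e0.
exists (fun i => Hyp (c i) (hw_neq0 (A i))); split=> [i|]; first by split=> //; exact: near_c.
by apply/dim_condP => s [x [_]]; rewrite hcapE => hx; apply: hc; exists x.
Qed.

Section Topology.
Variables (R : realType) (d : nat).
Implicit Types (X : set 'rV[R]_d) (A : hyp R d).

Lemma continuous_dotv (u : 'rV[R]_d) : continuous (dotv u).
Proof.
apply: (continuous_big add_continuous) => i _ x.
by apply: continuousM; [exact: cst_continuous | exact: coord_continuous].
Qed.

Lemma open_hpos A : open (hpos A).
Proof.
have -> : hpos A = hval A @^-1` [set r | r > 0] by [].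
apply: open_comp; last exact: open_gt.
move=> x _.
by apply: continuousB; [exact: continuous_dotv | exact: cst_continuous].
Qed.

Lemma open_open_polytope m (B : 'I_m -> hyp R d) : open (open_polytope B).
Proof.
rewrite openE => x Px; apply: (@filter_forall _ _ (fun j => hpos (B j)) (nbhs x) _) => j.
by have := open_hpos (A := B j); rewrite openE => /(_ x (Px j)).
Qed.

Lemma convex_open_polytope m (B : 'I_m -> hyp R d) : convex_set_rV (open_polytope B).
Proof.
move=> x y t Px Py /andP [t0 t1] j.
have hx : 0 < hval (B j) x := Px j; have hy : 0 < hval (B j) y := Py j.
rewrite /hpos /= dotvD !dotvZ.
have -> : (1 - t) * dotv (hw (B j)) x + t * dotv (hw (B j)) y - hh (B j) =
    (1 - t) * hval (B j) x + t * hval (B j) y by rewrite /hval; ring.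
nra.
Qed.

Lemma convex_comb_mem X : convex_set_rV X ->
  forall K (mu : 'I_K -> R) (p : 'I_K -> 'rV[R]_d),
  (forall k, 0 <= mu k) -> \sum_k mu k = 1 -> (forall k, X (p k)) ->
  X (\sum_k mu k *: p k).
Proof.
move=> cX; elim=> [|K IH] mu p mu0 mu1 Xp.
  by move: mu1; rewrite big_ord0 => /eqP; rewrite eq_sym oner_eq0.
rewrite big_ord_recr /=; move: mu1; rewrite big_ord_recr /=.
set t := mu ord_max; set S := \sum_(i < K) _ => mu1.
have S0 : 0 <= S by apply: sumr_ge0 => i _.
have [S_eq0|S_neq0] := eqVneq S 0.
  have mu_eq0 i : mu (widen_ord (leqnSn K) i) = 0.
    by apply/eqP; move/eqP: S_eq0; rewrite psumr_eq0 // => /allP/(_ i (mem_index_enum _)).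
  rewrite big1 ?add0r => [|i _]; last by rewrite mu_eq0 scale0r.
  by rewrite (_ : t = 1) ?scale1r // -mu1 S_eq0 add0r.
pose mu' i := mu (widen_ord (leqnSn K) i) / S.
have X_mu' : X (\sum_(i < K) mu' i *: p (widen_ord (leqnSn K) i)).
  apply: IH => [i||i]; [exact: divr_ge0 | by rewrite -mulr_suml divff | exact: Xp].
have -> : \sum_(i < K) mu (widen_ord (leqnSn K) i) *: p (widen_ord (leqnSn K) i) =
    (1 - t) *: \sum_(i < K) mu' i *: p (widen_ord (leqnSn K) i).
  rewrite (_ : 1 - t = S); last by rewrite -mu1 addrK.
  by rewrite scaler_sumr; apply: eq_bigr => i _; rewrite scalerA /mu' mulrC divfK.
by apply: cX => //; apply/andP; split; [exact: mu0 | lra].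
Qed.

Lemma open_box_nbhs X x : open X -> X x ->
  exists2 r, 0 < r & forall v : 'rV[R]_d, (forall j, `|v 0 j| < r) -> X (x + v).
Proof.
move=> oX Xx; have /nbhs_ballP [r r0 hr] := oX x Xx.
exists r => // v hv; apply: hr; split=> // i j; rewrite (ord1 i).
by rewrite /ball /= !mxE opprD addNKr normrN.
Qed.

Lemma open_segment_nbhs X x v : open X -> X x ->
  exists2 r, 0 < r & forall t, 0 < t -> t < r -> X (x + t *: v).
Proof.
move=> oX Xx; have [r r0 hr] := open_box_nbhs oX Xx.
have [r' r'0 hr'] := small_mul_lt (\sum_j `|v 0 j|) r0.
exists r' => // t t0 t_r'; apply: hr => j; rewrite mxE.
apply: le_lt_trans (hr' t t0 t_r'); rewrite !normrM ler_wpM2l //.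
by rewrite (le_trans _ (ler_norm _)) // (bigD1 j) //= lerDl sumr_ge0.
Qed.

End Topology.

Definition simplex {R : realType} K : set 'rV[R]_K :=
  [set mu | (forall k, 0 <= mu 0 k) /\ \sum_k mu 0 k = 1].
Arguments simplex {R} K.

Section Simplex.
Variable R : realType.

Lemma compact_simplex K : compact (@simplex R K).
Proof.
have -> : @simplex R K = [set mu | forall k, `[0, 1]%classic (mu 0 k)] `&`
    [set mu | \sum_k mu 0 k = 1].
  apply/seteqP; split=> mu [mu0 mu1]; split=> // k; last by have /andP [] := mu0 k.
  rewrite /= in_itv /= mu0 -mu1 (bigD1 k) //= lerDl.
  by apply: sumr_ge0 => i _.
apply: compact_closedI.
  exact: (@rV_compact R K (fun=> `[0, 1]%classic) (fun=> @segment_compact R 0 1)).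
apply: (@preimage_closed _ _ (fun mu : 'rV[R]_K => \sum_k mu 0 k) [set x | x = 1] _
  (closed_eq (y := 1))).
by move=> mu _; apply: (continuous_big add_continuous) => k _; exact: coord_continuous.
Qed.

Lemma compact_pos_lbound K (A : set 'rV[R]_K) (f : 'rV[R]_K -> R) :
  compact A -> continuous f -> (forall x, A x -> 0 < f x) ->
  exists2 m, 0 < m & forall x, A x -> m <= f x.
Proof.
move=> cA cf f_gt0; have [A0|/set0P A_neq0] := eqVneq A set0.
  by exists 1 => // x; rewrite A0.
have [c Ac hc] := EVT_min_rV A_neq0 cA (continuous_subspaceT cf).
rewrite inE in Ac; exists (f c); first exact: f_gt0.
by move=> x Ax; apply: hc; rewrite inE.
Qed.

End Simplex.

Section HyperplaneCode.
Variables (R : realType) (d n : nat) (H : 'I_n -> hyp R d).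

Definition pos_set (x : 'rV[R]_d) : {set 'I_n} := [set i | 0 < hval (H i) x]%SET.

Lemma hcodeP (X : set 'rV[R]_d) s : s \in hcode H X <-> exists2 x, X x & s = pos_set x.
Proof.
rewrite inE; split=> [/asboolP [x [Xx [s_pos s_npos]]] | [x Xx ->]].
  exists x => //; apply/setP => i; rewrite inE.
  by case: (boolP (i \in s)) => [/s_pos -> // | /s_npos /negP /negbTE ->].
by apply/asboolP; exists x; split=> //; split=> i; rewrite inE // => /negP.
Qed.

Variable X : set 'rV[R]_d.
Hypotheses (oX : open X) (cX : convex_set_rV X) (sX : dim_cond H X).

Lemma row_free_hcap x s : X x -> hcap H s x -> row_free (normal_mx (normals H) s).
Proof. by move=> Xx hx; apply: (proj1 (dim_condP H X) sX); exists x. Qed.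

Lemma hcode_strict_witness s : s \in hcode H X ->
  exists2 x, X x & s = pos_set x /\ forall i, hval (H i) x != 0.
Proof.
case/hcodeP => x Xx ->{s}; pose z := [set i | hval (H i) x == 0]%SET.
have z_free : row_free (normal_mx (normals H) z).
  by apply: (row_free_hcap Xx) => i; rewrite inE => /eqP.
pose v := affsolve (normals H) z (fun=> -1).
have v_z i : i \in z -> dotv (hw (H i)) v = -1 by move=> iz; exact: affsolveP.
have [t t0 ht] : exists2 t, 0 < t & forall o : option 'I_n,
    if o is Some i then i \notin z -> `|t * dotv (hw (H i)) v| < `|hval (H i) x|
    else X (x + t *: v).
  apply: (@forall_small_pos _ (option 'I_n)) => -[i|]; last exact: open_segment_nbhs.
  case: (boolP (i \in z)) => [_|iz]; first by exists 1.
  have hx0 : 0 < `|hval (H i) x| by rewrite normr_gt0; move: iz; rewrite inE.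
  have [r r0 hr] := small_mul_lt (dotv (hw (H i)) v) hx0.
  by exists r => // t' t'0 t'r _; exact: hr.
exists (x + t *: v); first exact: (ht None).
have hval_z i : i \in z -> hval (H i) (x + t *: v) = - t.
  by move=> iz; rewrite hvalD dotvZ v_z //; move: iz; rewrite inE => /eqP ->; rewrite add0r mulrN1.
split=> [|i].
  apply/setP => i; rewrite !inE; case: (boolP (i \in z)) => iz.
    by rewrite hval_z //; move: iz; rewrite inE => /eqP ->; rewrite ltxx oppr_gt0 ltNge ltW.
  by rewrite hvalD dotvZ addr_gt0_norm_lt //; exact: (ht (Some i)).
case: (boolP (i \in z)) => iz; first by rewrite hval_z // oppr_eq0 lt0r_neq0.
rewrite hvalD dotvZ; apply: contraTneq (ht (Some i) iz) => /eqP.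
by rewrite addr_eq0 => /eqP ->; rewrite normrN ltxx.
Qed.

Section Robustness.
Variables (K : nat) (p : 'I_K -> 'rV[R]_d).
Hypothesis Xp : forall k, X (p k).

Definition hull_pt (mu : 'rV[R]_K) : 'rV[R]_d := \sum_k mu 0 k *: p k.

Lemma hull_pt_mem mu : simplex K mu -> X (hull_pt mu).
Proof. by case=> mu0 mu1; apply: convex_comb_mem. Qed.

Lemma hval_hull_pt i mu : simplex K mu ->
  hval (H i) (hull_pt mu) = dotv (\row_k hval (H i) (p k)) mu.
Proof.
by case=> _ mu1; rewrite /hull_pt hval_convex //; apply: eq_bigr => k _; rewrite mxE mulrC.
Qed.

Lemma deficient_hull_lbound s : ~~ row_free (normal_mx (normals H) s) ->
  exists2 m : R, 0 < m & forall mu, simplex K mu ->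
    m <= \sum_(i in s) `|hval (H i) (hull_pt mu)|.
Proof.
move=> def_s; pose f mu := \sum_(i in s) `|dotv (\row_k hval (H i) (p k)) mu|.
have [m m0 hm] : exists2 m, 0 < m & forall mu, simplex K mu -> m <= f mu.
  apply: compact_pos_lbound; first exact: compact_simplex.
    apply: (continuous_big add_continuous) => i _ mu.
    by apply: continuous_comp; [exact: continuous_dotv | exact: norm_continuous].
  move=> mu mu_s; rewrite lt_def sumr_ge0 // andbT; apply: contraNneq def_s => /eqP.
  rewrite psumr_eq0 // => /allP f0; apply: (row_free_hcap (hull_pt_mem mu_s)) => i si.
  have := f0 i (mem_index_enum i); rewrite si normr_eq0 -hval_hull_pt //.
  by move/eqP.
by exists m => // mu mu_s; under eq_bigr => i _ do rewrite hval_hull_pt //; exact: hm.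
Qed.

Lemma hull_near_free : exists2 eta : R, 0 < eta & forall mu, simplex K mu ->
  row_free (normal_mx (normals H) [set i | `|hval (H i) (hull_pt mu)| < eta]%SET).
Proof.
have [eta eta0 heta] : exists2 eta, 0 < eta & forall s,
    ~~ row_free (normal_mx (normals H) s) -> forall mu, simplex K mu ->
    eta *+ n.+1 <= \sum_(i in s) `|hval (H i) (hull_pt mu)|.
  apply: forall_small_pos => s; case: (boolP (row_free _)) => [_|]; first by exists 1.
  case/deficient_hull_lbound => m m0 hm.
  exists (m / n.+1%:R) => [|e e0 e_lt _ mu mu_s]; first by rewrite divr_gt0.
  by apply: le_trans (hm mu mu_s); rewrite -mulr_natr -ler_pdivlMr // ltW.
exists eta => // mu mu_s; apply: contraT => /heta /(_ mu mu_s).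
rewrite leNgt => /negbTE <-.
apply: (@le_lt_trans _ _ (eta *+ n)); last by rewrite mulrS ltrDr.
rewrite big_mkcond /= -[n in eta *+ n]card_ord -sumr_const; apply: ler_sum => i _.
by case: ifP => [|_]; [rewrite inE => /ltW | exact: ltW].
Qed.

Lemma hull_box_nbhs (b : R) : 0 < b ->
  exists2 rho : R, 0 < rho & forall mu (v : 'rV[R]_d), simplex K mu ->
  (forall j, `|v 0 j| < rho) -> X (hull_pt mu + v) /\ forall i, `|dotv (hw (H i)) v| < b.
Proof.
move=> b0; have [rho rho0 hrho] : exists2 rho : R, 0 < rho & forall o : 'I_K + 'I_n,
    match o with
    | inl k => forall v : 'rV[R]_d, (forall j, `|v 0 j| < rho) -> X (p k + v)
    | inr i => `|rho * \sum_j `|hw (H i) 0 j| | < b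
    end.
  apply: forall_small_pos => -[k|i].
    have [r r0 hr] := open_box_nbhs oX (Xp k).
    by exists r => // e _ e_r v hv; apply: hr => j; exact: lt_trans (hv j) e_r.
  have [r r0 hr] := small_mul_lt (\sum_j `|hw (H i) 0 j|) b0.
  by exists r => // e e0 e_r; exact: hr.
exists rho => // mu v [mu0 mu1] hv; split=> [|i].
  have -> : hull_pt mu + v = \sum_k mu 0 k *: (p k + v).
    by under eq_bigr do rewrite scalerDr; rewrite big_split /= -scaler_suml mu1 scale1r.
  by apply: convex_comb_mem => // k; apply: (hrho (inl k)).
have := hrho (inr i); rewrite normrM [`|rho|]ger0_norm ?ltW //.
rewrite [X in _ * X]ger0_norm ?sumr_ge0 //; apply: le_lt_trans.
by apply: normr_dotv_le => j; exact: ltW.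
Qed.

Lemma hcode_robust : exists2 del : R, 0 < del & forall mu (u : 'I_n -> R),
  simplex K mu -> (forall i, `|u i| < del) ->
  [set i | 0 < hval (H i) (hull_pt mu) + u i]%SET \in hcode H X.
Proof.
have [eta eta0 free_near] := hull_near_free.
have eta2 : 0 < eta / 2 by rewrite divr_gt0.
have [rho rho0 hrho] := hull_box_nbhs eta2.
have [del del0 hdel] := affsolve_small (normals H) rho0.
exists (Num.min del (eta / 2)) => [|mu u mu_s hu]; first by rewrite lt_min del0.
have [u_del u_eta] : (forall i, `|u i| < del) /\ (forall i, `|u i| < eta / 2).
  by split=> i; have := hu i; rewrite lt_min => /andP [].
set s := [set i | `|hval (H i) (hull_pt mu)| < eta]%SET.
pose v := affsolve (normals H) s u.
have [Xv small_v] := hrho mu v mu_s (hdel s u u_del).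
apply/hcodeP; exists (hull_pt mu + v) => //; apply/setP => i; rewrite !inE hvalD.
case: (boolP (i \in s)) => si; first by rewrite (affsolveP _ (free_near mu mu_s)).
have far : eta / 2 <= `|hval (H i) (hull_pt mu)|.
  by move: si; rewrite inE -leNgt; apply: le_trans; rewrite ler_pdivrMr // ler_pMr // ler1n.
have v_small := lt_le_trans (small_v i) far; have u_small := lt_le_trans (u_eta i) far.
by rewrite [LHS]addr_gt0_norm_lt // [RHS]addr_gt0_norm_lt.
Qed.

End Robustness.
End HyperplaneCode.

Section Embedding.
Variables (R : realType) (d n K : nat) (H : 'I_n -> hyp R d) (p : 'I_K -> 'rV[R]_d).
Variables (H' : 'I_n -> hyp R K) (B' : 'I_K.+1 -> hyp R K) (eps : R).
Hypotheses (hwH' : forall i, hw (H' i) = \row_k hval (H i) (p k))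
  (hhH' : forall i, `|hh (H' i)| < eps)
  (hwB' : forall k, hw (B' (lift ord_max k)) = delta_mx 0 k)
  (hhB' : forall k, `|hh (B' (lift ord_max k)) - eps| < eps)
  (hwB'max : hw (B' ord_max) = const_mx 1)
  (hhB'max : `|hh (B' ord_max) - 1| < eps)
  (eps_small : 4 * eps <= 1).

Lemma hval_embedded i lam :
  hval (H' i) lam = \sum_k lam 0 k * hval (H i) (p k) - hh (H' i).
Proof. by rewrite /hval hwH'; congr (_ - _); apply: eq_bigr => k _; rewrite mxE mulrC. Qed.

Lemma embedded_polytopeP lam : open_polytope B' lam <->
  (forall k, hh (B' (lift ord_max k)) < lam 0 k) /\ hh (B' ord_max) < \sum_k lam 0 k.
Proof.
split=> [Plam | [lam_k lam_S] j].
  split=> [k|]; [have := Plam (lift ord_max k) | have := Plam ord_max];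
    by rewrite /hpos /= subr_gt0 ?hwB' ?hwB'max ?dotv_delta ?dotv_const1.
by case: (unliftP ord_max j) => [k ->|->];
  rewrite /hpos /= subr_gt0 ?hwB' ?hwB'max ?dotv_delta ?dotv_const1.
Qed.

Lemma embedded_hcode_sub (X : set 'rV[R]_d) (del : R) :
  (forall mu u, simplex K mu -> (forall i, `|u i| < del) ->
     [set i | 0 < hval (H i) (hull_pt p mu) + u i]%SET \in hcode H X) ->
  4 * eps <= del -> {subset hcode H' (open_polytope B') <= hcode H X}.
Proof.
move=> robust eps_del s /hcodeP [lam /embedded_polytopeP [lam_k lam_S] ->{s}].
set S := \sum_k lam 0 k in lam_S *.
have S_gt : 1 < 4 * S.
  by move: hhB'max eps_small; rewrite ltr_distl => /andP [? _] ?; lra.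
have S0 : 0 < S by lra.
have lam0 k : 0 <= lam 0 k.
  by move: (lam_k k) (hhB' k); rewrite ltr_distl => ? /andP [? _]; lra.
pose mu := S^-1 *: lam; pose u i := - hh (H' i) / S.
have mu_s : simplex K mu.
  split=> [k|]; first by rewrite mxE mulr_ge0 // invr_ge0 ltW.
  by rewrite /mu; under eq_bigr do rewrite mxE; rewrite -mulr_sumr mulVf // gt_eqF.
have hu i : `|u i| < del.
  rewrite normrM normrN normfV (gtr0_norm S0) ltr_pdivrMr //.
  apply: lt_le_trans (hhH' i) _; have := normr_ge0 (hh (H' i)).
  by move: (hhH' i) eps_del; nra.
suff -> : pos_set H' lam = [set i | 0 < hval (H i) (hull_pt p mu) + u i]%SET by exact: robust.
apply/setP => i; rewrite !inE hval_hull_pt // hval_embedded.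
have -> : dotv (\row_k hval (H i) (p k)) mu + u i =
    S^-1 * (\sum_k lam 0 k * hval (H i) (p k) - hh (H' i)).
  rewrite mulrBr mulr_sumr /u mulNr [S^-1 * _]mulrC; congr (_ - _).
  by apply: eq_bigr => k _; rewrite !mxE mulrCA [hval _ _ * _]mulrC.
by rewrite pmulr_rgt0 ?invr_gt0.
Qed.

Lemma embedded_hcode_sup k :
  (forall i, 2 * eps * \sum_l `|hval (H i) (p l)| + eps < `|hval (H i) (p k)|) ->
  pos_set H (p k) \in hcode H' (open_polytope B').
Proof.
move=> far; pose lam : 'rV[R]_K := delta_mx 0 k + const_mx (2 * eps).
have eps0 : 0 < eps by apply: le_lt_trans (normr_ge0 _) hhB'max.
have lamE l : lam 0 l = (l == k)%:R + 2 * eps by rewrite !mxE.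
apply/hcodeP; exists lam.
  apply/embedded_polytopeP; split=> [l|].
    rewrite lamE; move: (hhB' l); rewrite ltr_distl => /andP [_ ?].
    by have : 0 <= (l == k)%:R :> R by []; lra.
  have rest0 : 0 <= \sum_(l | l != k) lam 0 l.
    apply: sumr_ge0 => l _; rewrite !mxE eqxx andTb.
    by have : 0 <= (l == k)%:R :> R by []; lra.
  have lamk : lam 0 k = 1 + 2 * eps by rewrite lamE eqxx.
  have -> : \sum_l lam 0 l = lam 0 k + \sum_(l | l != k) lam 0 l by rewrite (bigD1 k).
  by move: hhB'max; rewrite ltr_distl lamk => /andP [_ ?]; lra.
apply/setP => i; rewrite !inE hval_embedded.
have -> : \sum_l lam 0 l * hval (H i) (p l) - hh (H' i) =
    hval (H i) (p k) + (2 * eps * \sum_l hval (H i) (p l) - hh (H' i)).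
  rewrite addrA; congr (_ - _); under eq_bigr do rewrite lamE mulrDl.
  rewrite big_split /= -mulr_sumr (bigD1 k) //= eqxx mul1r big1 ?addr0 // => l /negbTE ->.
  by rewrite mul0r.
have bound : `|2 * eps * \sum_l hval (H i) (p l) - hh (H' i)| <=
    2 * eps * \sum_l `|hval (H i) (p l)| + eps.
  apply: le_trans (ler_normB _ _) (lerD _ (ltW (hhH' i))).
  have eps2 : 0 <= 2 * eps by rewrite mulr_ge0 ?ltW.
  by rewrite normrM (ger0_norm eps2) ler_wpM2l // ler_norm_sum.
by rewrite addr_gt0_norm_lt // (le_lt_trans bound (far i)).
Qed.

End Embedding.

Section Concatenation.
Variables (R : realType) (D n m : nat).

Lemma exists_generic_hcat (g : 'I_n -> 'rV[R]_D) (b : 'I_m -> 'rV[R]_D)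
    (cg : 'I_n -> R) (cb : 'I_m -> R) e :
  (forall i, g i != 0) -> (forall j, b j != 0) -> 0 < e ->
  exists (H' : 'I_n -> hyp R D) (B' : 'I_m -> hyp R D),
    [/\ forall i, hw (H' i) = g i /\ `|hh (H' i) - cg i| < e,
        forall j, hw (B' j) = b j /\ `|hh (B' j) - cb j| < e &
        generic_intersections (hcat H' B')].
Proof.
move=> g0 b0 e0; pose H0 i := Hyp (cg i) (g0 i); pose B0 j := Hyp (cb j) (b0 j).
have [A [near_A genA]] := generic_perturbation (hcat H0 B0) e0.
exists (fun i => A (lshift m i)), (fun j => A (rshift n j)); split.
- by move=> i; have := near_A (lshift m i); rewrite /hcat (unsplitK (inl i)).
- by move=> j; have := near_A (rshift n j); rewrite /hcat (unsplitK (inr j)).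
suff -> : hcat (fun i => A (lshift m i)) (fun j => A (rshift n j)) = A by [].
apply: funext => k; rewrite /hcat; have := splitK k.
by case: (fintype.split k) => [i|j] /= <-.
Qed.

Lemma dim_cond_hcatl (A : 'I_n -> hyp R D) (B : 'I_m -> hyp R D) (Y : set 'rV[R]_D) :
  generic_intersections (hcat A B) -> dim_cond A Y.
Proof.
move=> gen s [x [_ hx]]; pose s' := [set lshift m i | i in s]%SET.
have hcapE : hcap (hcat A B) s' = hcap A s.
  apply/seteqP; split=> y hy => [i si | _ /imsetP [i si ->]].
    by have := hy _ (imset_f _ si); rewrite /hcat (unsplitK (inl i)).
  by rewrite /hcat (unsplitK (inl i)); exact: hy.
have card_s' : #|s'| = #|s| by rewrite card_imset //; exact: lshift_inj.
by rewrite -hcapE -card_s'; apply: gen; exists x; rewrite hcapE.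
Qed.

End Concatenation.

Lemma empty_code_realization (R : realType) n :
  exists (D m : nat) (H' : 'I_n -> hyp R D) (B' : 'I_m -> hyp R D),
    [/\ stable_pair H' (open_polytope B'),
        forall s, s \notin hcode H' (open_polytope B') &
        generic_intersections (hcat H' B')].
Proof.
have c_neq0 (c : R) : c != 0 -> const_mx c != 0 :> 'rV[R]_1.
  by move=> c0; apply: contraNneq c0 => /rowP/(_ 0); rewrite !mxE => ->.
pose b (j : 'I_2) : 'rV[R]_1 := const_mx (if j == ord0 then 1 else -1).
have b0 j : b j != 0 by apply: c_neq0; case: ifP; rewrite ?oppr_eq0 oner_eq0.
have half0 : (0 : R) < 2^-1 by rewrite invr_gt0.
have [H' [B' [_ hB' gen]]] :=
  exists_generic_hcat (fun _ : 'I_n => 0) (fun=> 1) (fun=> c_neq0 _ (oner_neq0 R)) b0 half0.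
have P0 x : ~ open_polytope B' x.
  move=> Px; have [hw0 h0] := hB' ord0; have [hw1 h1] := hB' ord_max.
  have := Px ord0; have := Px ord_max; rewrite /hpos /= hw0 hw1 /dotv !big_ord1 !mxE /=.
  move: h0 h1; rewrite !ltr_distl => /andP [? _] /andP [? _]; lra.
exists 1%N, 2%N, H', B'; split=> // [|s]; last by apply/negP => /hcodeP [x /P0].
split; last split; first exact: open_open_polytope.
  exact: convex_open_polytope.
by move=> s [x [/P0]].
Qed.

Lemma exists_embedding_eps (R : realType) d n K (H : 'I_n -> hyp R d)
    (p : 'I_K -> 'rV[R]_d) (del : R) :
  0 < del -> (forall i k, hval (H i) (p k) != 0) ->
  exists2 eps : R, 0 < eps & [/\ 4 * eps <= del, 4 * eps <= 1 &
    forall i k, 2 * eps * \sum_l `|hval (H i) (p l)| + eps < `|hval (H i) (p k)|].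
Proof.
move=> del0 p0; pose T i := \sum_l `|hval (H i) (p l)|.
have [eps eps0 heps] : exists2 eps : R, 0 < eps & forall o : option ('I_n * 'I_K),
    if o is Some (i, k) then 2 * eps * T i + eps < `|hval (H i) (p k)|
    else 4 * eps < Num.min del 1.
  apply: forall_small_pos => -[[i k]|].
    have hik : 0 < `|hval (H i) (p k)| by rewrite normr_gt0.
    have [r r0 hr] := small_mul_lt (2 * T i + 1) hik.
    exists r => // t t0 t_r; move: (hr t t0 t_r).
    by rewrite gtr0_norm ?mulr_gt0 ?ltr_pwDr ?mulr_ge0 ?sumr_ge0 // mulrDr mulr1 mulrCA mulrA.
  have m0 : 0 < Num.min del 1 by rewrite lt_min del0 ltr01.
  exists (Num.min del 1 / 4) => [|t t0]; first by rewrite divr_gt0.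
  by rewrite ltr_pdivlMr // mulrC.
have := heps None; rewrite lt_min => /andP [/ltW eps_del /ltW eps1].
by exists eps => //; split=> // i k; exact: (heps (Some (i, k))).
Qed.

Definition polytope_normal {R : realType} K (j : 'I_K.+1) : 'rV[R]_K :=
  if unlift ord_max j is Some k then delta_mx 0 k else const_mx 1.

Lemma nonempty_code_realization (R : realType) d n (H : 'I_n -> hyp R d)
    (X : set 'rV[R]_d) :
  stable_pair H X -> (0 < #|hcode H X|)%N ->
  exists (D m : nat) (H' : 'I_n -> hyp R D) (B' : 'I_m -> hyp R D),
    stable_pair H' (open_polytope B') /\ hcode H X = hcode H' (open_polytope B') /\
    generic_intersections (hcat H' B').
Proof.
move=> [oX [cX sX]] C_gt0; set K := #|hcode H X|.
have /fin_all_exists2 [p Xp /all_and2 [pE p0]] : forall k : 'I_K, exists2 x, X x &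
    enum_val k = pos_set H x /\ forall i, hval (H i) x != 0.
  by move=> k; have [x Xx hx] := hcode_strict_witness oX sX (enum_valP k); exists x.
have [del del0 robust] := hcode_robust oX cX sX Xp.
have [eps eps0 [eps_del eps1 far]] := exists_embedding_eps del0 (fun i k => p0 k i).
pose k0 : 'I_K := Ordinal C_gt0.
have g0 i : \row_k hval (H i) (p k) != 0.
  by apply: contraNneq (p0 k0 i) => /rowP/(_ k0); rewrite !mxE => ->.
have b0 j : polytope_normal j != 0 :> 'rV[R]_K.
  rewrite /polytope_normal; case: unliftP => [k _|_]; apply/negP => /eqP/rowP.
    by move=> /(_ k); rewrite !mxE !eqxx; apply/eqP; exact: oner_neq0.
  by move=> /(_ k0); rewrite !mxE; apply/eqP; exact: oner_neq0.
have [H' [B' [hH' hB' gen]]] := exists_generic_hcat (fun _ => 0)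
  (fun j => if unlift ord_max j is Some _ then eps else 1) g0 b0 eps0.
have hwH' i := (hH' i).1.
have hhH' i : `|hh (H' i)| < eps by rewrite -[hh _]subr0; exact: (hH' i).2.
have hwB' k : hw (B' (lift ord_max k)) = delta_mx 0 k.
  by have [] := hB' (lift ord_max k); rewrite /polytope_normal liftK.
have hhB' k : `|hh (B' (lift ord_max k)) - eps| < eps.
  by have [_] := hB' (lift ord_max k); rewrite liftK.
have [hwB'max hhB'max] : hw (B' ord_max) = const_mx 1 /\ `|hh (B' ord_max) - 1| < eps.
  by have := hB' ord_max; rewrite /polytope_normal unlift_none.
exists K, K.+1, H', B'; split; [|split] => //.
  split; first exact: open_open_polytope.
  by split; [exact: convex_open_polytope | exact: dim_cond_hcatl gen].
apply/setP => s; apply/idP/idP => [sC|]; last first.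
  exact: (embedded_hcode_sub hwH' hhH' hwB' hhB' hwB'max hhB'max eps1 robust eps_del).
rewrite -(enum_rankK_in sC sC) pE.
exact: (embedded_hcode_sup hwH' hhH' hwB' hhB' hwB'max hhB'max (far^~ _)).
Qed.

Theorem lemma7p3 (R : realType) (n : nat) (C : {set {set 'I_n}}) :
  stable_hyperplane_code R C ->
  exists (d m : nat) (H : 'I_n -> hyp R d) (B : 'I_m -> hyp R d),
    stable_pair H (open_polytope B) /\
    C = hcode H (open_polytope B) /\
    generic_intersections (hcat H B).
Proof.
move=> [d [H [X [sHX ->]]]].
case: (posnP #|hcode H X|) => [/card0_eq C0|C_gt0]; last exact: nonempty_code_realization.
have [D [m [H' [B' [sp C'0 gen]]]]] := empty_code_realization R n.
exists D, m, H', B'; split=> //; split=> //.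
by apply/setP => s; rewrite C0 (negbTE (C'0 s)).
Qed.
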